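(* Let $A$ be an enumerable set of binary strings. There exists an oracle machine $\Psi$ such that for every $1$-generic sequence $G\in\mathbb{N}^{\mathbb{N}}$, the machine $\Psi$ with oracle $G$ computes a total function $\alpha$ with $\underline{E}(\alpha,A)=0$.
   Context: A sequence $G\in\mathbb{N}^{\mathbb{N}}$ is $1$-generic if for every enumerable set $W$ of finite sequences of natural numbers, either $G$ has a prefix in $W$ or $G$ has a prefix none of whose extensions lies in $W$. For a total function $\alpha$ on binary strings, let $\varepsilon_n$ be the fraction of binary strings of length at most $n$ on which $\alpha$ differs from the characteristic function of $A$, and $\underline{E}(\alpha,A)=\liminf_n\varepsilon_n$. *)

From Stdlib Require Import Arith List Reals Cantor.
From Coquelicot Require Import Coquelicot.
Import ListNotations.
Local Open Scope nat_scope.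

(* A model of oracle computation: unary mu-recursive functions on nat  *)
(* (arguments paired with the Cantor pairing), with an oracle call.     *)

Definition pair (a b : nat) : nat := Cantor.to_nat (a, b).
Definition fst_n (n : nat) : nat := fst (Cantor.of_nat n).
Definition snd_n (n : nat) : nat := snd (Cantor.of_nat n).

Inductive code : Type :=
| CZero
| CSucc
| CId
| CFst
| CSnd
| COracle
| CPair (f g : code)
| CComp (f g : code)
| CPrec (f g : code)         (* h <a,0> = f a ; h <a,n+1> = g <a,<n,h <a,n>>> *)
| CMu (f : code).            (* x |-> least n with f <x,n> = 0 (all earlier defined) *)

Inductive eval (G : nat -> nat) : code -> nat -> nat -> Prop :=
| ev_zero x : eval G CZero x 0
| ev_succ x : eval G CSucc x (S x)
| ev_id x : eval G CId x x
| ev_fst x : eval G CFst x (fst_n x)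
| ev_snd x : eval G CSnd x (snd_n x)
| ev_oracle x : eval G COracle x (G x)
| ev_pair f g x y z : eval G f x y -> eval G g x z -> eval G (CPair f g) x (pair y z)
| ev_comp f g x y z : eval G g x y -> eval G f y z -> eval G (CComp f g) x z
| ev_prec0 f g a y : eval G f a y -> eval G (CPrec f g) (pair a 0) y
| ev_precS f g a n z y : eval G (CPrec f g) (pair a n) z ->
    eval G g (pair a (pair n z)) y -> eval G (CPrec f g) (pair a (S n)) y
| ev_mu f x n : eval G f (pair x n) 0 ->
    (forall m : nat, (m < n)%nat -> exists y, eval G f (pair x m) (S y)) ->
    eval G (CMu f) x n.

(* Computation without oracle (the oracle is the constant 0 function,
   which is computable, so this is plain partial computability). *)
Definition eval0 (c : code) (x y : nat) : Prop := eval (fun _ => 0) c x y.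

(* Bijective base-2 numbering of binary strings. *)
Fixpoint enc_bits (s : list bool) : nat :=
  match s with
  | [] => 0
  | b :: s' => 2 * enc_bits s' + (if b then 2 else 1)
  end.

Fixpoint enc_nats (s : list nat) : nat :=
  match s with
  | [] => 0
  | x :: s' => S (pair x (enc_nats s'))
  end.

Definition enumerable_bits (A : list bool -> bool) : Prop :=
  exists e : code, forall s, A s = true <-> exists y, eval0 e (enc_bits s) y.

Definition enumerable_nats (W : list nat -> Prop) : Prop :=
  exists e : code, forall s, W s <-> exists y, eval0 e (enc_nats s) y.

Definition prefix (G : nat -> nat) (n : nat) : list nat := map G (seq 0 n).

Definition one_generic (G : nat -> nat) : Prop :=
  forall W : list nat -> Prop, enumerable_nats W ->
    (exists n, W (prefix G n)) \/
    (exists n, forall t : list nat, ~ W (prefix G n ++ t)).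

Fixpoint strings_of_len (k : nat) : list (list bool) :=
  match k with
  | 0 => [[]]
  | S k' => flat_map (fun s => [false :: s; true :: s]) (strings_of_len k')
  end.

Definition strings_upto (n : nat) : list (list bool) :=
  flat_map strings_of_len (seq 0 (S n)).

Definition err_frac (alpha A : list bool -> bool) (n : nat) : R :=
  (INR (length (filter (fun s => negb (Bool.eqb (alpha s) (A s))) (strings_upto n)))
  / INR (length (strings_upto n)))%R.

Definition lower_err (alpha A : list bool -> bool) : Rbar :=
  LimInf_seq (err_frac alpha A).

(* The machine copies the oracle: alpha(s) = 1 iff G(code of s) <> 0, and since the strings of
   length <= n are exactly the codes below 2^(n+1) - 1, it suffices to show that on infinitely
   many initial segments [0, N) the set A and the support of G differ on at most (4N + K)/K
   points, for every K.  Fix K and let j be maximal such that A has density >= j/K on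
   infinitely many initial segments; on all long segments its density is then < (j+1)/K.
   Let W be the enumerable set of strings of length N >= M whose nonzero entries at positions
   i >= N/K all lie in A and number at least (j-2)N/K.  No prefix of G can avoid W, because
   extending it by the characteristic function of A lands in W; so by 1-genericity some
   prefix of G lies in W.  On that prefix G is nonzero only on points of A (positions < N/K
   aside), and it misses fewer than 3N/K points of A since A has fewer than (j+1)N/K there. *)
From Stdlib Require Import Arith List Lia Cantor Bool Reals Lra.
From Stdlib Require Import Classical ClassicalEpsilon FunctionalExtensionality.
From Coquelicot Require Import Coquelicot.
Import ListNotations.
Local Open Scope nat_scope.

Lemma fst_pair a b : fst_n (pair a b) = a.
Proof. unfold fst_n, pair. now rewrite Cantor.cancel_of_to. Qed.

Lemma snd_pair a b : snd_n (pair a b) = b.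
Proof. unfold snd_n, pair. now rewrite Cantor.cancel_of_to. Qed.

#[local] Hint Rewrite fst_pair snd_pair : pairs.

Lemma pair_inj a b c d : pair a b = pair c d -> a = c /\ b = d.
Proof.
  intro E. split.
  - now rewrite <- (fst_pair a b), E, fst_pair.
  - now rewrite <- (snd_pair a b), E, snd_pair.
Qed.

Lemma pair_fst_snd x : pair (fst_n x) (snd_n x) = x.
Proof. unfold fst_n, snd_n, pair. rewrite <- surjective_pairing. apply Cantor.cancel_to_of. Qed.

Section EvalInversion.
Variable G : nat -> nat.

Lemma eval_comp_inv f g x z :
  eval G (CComp f g) x z -> exists y, eval G g x y /\ eval G f y z.
Proof. inversion 1; eauto. Qed.

Lemma eval_pair_inv f g x w :
  eval G (CPair f g) x w -> exists y z, eval G f x y /\ eval G g x z /\ w = pair y z.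
Proof. inversion 1; eauto. Qed.

Lemma eval_prec_inv f g x y : eval G (CPrec f g) x y ->
  (exists a, x = pair a 0 /\ eval G f a y) \/
  (exists a n z, x = pair a (S n) /\ eval G (CPrec f g) (pair a n) z /\
                 eval G g (pair a (pair n z)) y).
Proof. inversion 1; subst; eauto 10. Qed.

Lemma eval_mu_inv f x n : eval G (CMu f) x n ->
  eval G f (pair x n) 0 /\ forall m, m < n -> exists y, eval G f (pair x m) (S y).
Proof. inversion 1; eauto. Qed.

End EvalInversion.

Definition computes (c : code) (f : nat -> nat) : Prop :=
  forall G x y, eval G c x y <-> y = f x.

Lemma computes_ext c f g : computes c f -> (forall x, f x = g x) -> computes c g.
Proof. intros hc E G x y. rewrite (hc G x y), E. reflexivity. Qed.

Ltac computes_base := intros ? ? ?; split; [inversion 1; auto | intros ->; constructor].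

Lemma computes_zero : computes CZero (fun _ => 0). Proof. computes_base. Qed.
Lemma computes_succ : computes CSucc S. Proof. computes_base. Qed.
Lemma computes_id : computes CId (fun x => x). Proof. computes_base. Qed.
Lemma computes_fst : computes CFst fst_n. Proof. computes_base. Qed.
Lemma computes_snd : computes CSnd snd_n. Proof. computes_base. Qed.

Lemma computes_comp f g F H :
  computes f F -> computes g H -> computes (CComp f g) (fun x => F (H x)).
Proof.
  intros hf hg G x z; split.
  - intros (y & Hg & Hf)%eval_comp_inv. apply hg in Hg; apply hf in Hf. congruence.
  - intros ->. econstructor; [apply hg | apply hf]; reflexivity.
Qed.

Lemma computes_pair f g F H :
  computes f F -> computes g H -> computes (CPair f g) (fun x => pair (F x) (H x)).
Proof.
  intros hf hg G x w; split.
  - intros (y & z & Hf & Hg & ->)%eval_pair_inv. apply hf in Hf; apply hg in Hg. congruence.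
  - intros ->. econstructor; [apply hf | apply hg]; reflexivity.
Qed.

Fixpoint primrec (F H : nat -> nat) (a n : nat) : nat :=
  match n with 0 => F a | S m => H (pair a (pair m (primrec F H a m))) end.

Lemma computes_prec f g F H : computes f F -> computes g H ->
  computes (CPrec f g) (fun x => primrec F H (fst_n x) (snd_n x)).
Proof.
  intros hf hg G x y. rewrite <- (pair_fst_snd x) at 1.
  generalize (fst_n x) (snd_n x) y. clear x y. intros a n.
  induction n as [|n IH]; intro y; split.
  - intros [(a' & E & Hf) | (a' & n' & z & E & _)]%eval_prec_inv;
      apply pair_inj in E as [<- E]; [now apply (hf G) | discriminate].
  - intros ->. constructor. now apply (hf G).
  - intros [(a' & E & _) | (a' & n' & z & E & Hrec & Hg)]%eval_prec_inv;
      apply pair_inj in E as [<- E]; [discriminate|].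
    injection E as <-. apply IH in Hrec. apply (hg G) in Hg. now subst.
  - intros ->. econstructor; [apply IH | apply hg]; reflexivity.
Qed.

Lemma eval_mu_iff f F : computes f F -> forall G x n,
  eval G (CMu f) x n <-> F (pair x n) = 0 /\ (forall m, m < n -> F (pair x m) <> 0).
Proof.
  intros hf G x n; split.
  - intros [H0 Hlt]%eval_mu_inv. split; [now apply (hf G) in H0|].
    intros m Hm. destruct (Hlt m Hm) as [y Hy]. apply (hf G) in Hy. congruence.
  - intros [H0 Hlt]. constructor; [apply (hf G); congruence|].
    intros m Hm. specialize (Hlt m Hm). destruct (F (pair x m)) as [|y] eqn:E; [congruence|].
    exists y. apply (hf G); congruence.
Qed.

Fixpoint const_c (k : nat) : code :=
  match k with 0 => CZero | S k => CComp CSucc (const_c k) end.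

Lemma computes_const k : computes (const_c k) (fun _ => k).
Proof.
  induction k as [|k IH]; [apply computes_zero|].
  exact (computes_comp _ _ _ _ computes_succ IH).
Qed.

Definition iter_c (f : code) : code := CPrec CId (CComp f (CComp CSnd CSnd)).

Lemma computes_iter f F : computes f F ->
  computes (iter_c f) (fun x => Nat.iter (snd_n x) F (fst_n x)).
Proof.
  intro hf. eapply computes_ext.
  - apply computes_prec; [apply computes_id|].
    apply computes_comp; [exact hf | exact (computes_comp _ _ _ _ computes_snd computes_snd)].
  - intro x. cbv beta. generalize (snd_n x).
    induction n as [|n IH]; cbn [primrec Nat.iter]; [reflexivity|].
    now rewrite !snd_pair, IH.
Qed.

Definition pred_c : code := CComp (CPrec CZero (CComp CFst CSnd)) (CPair CZero CId).

Lemma computes_pred : computes pred_c Nat.pred.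
Proof.
  eapply computes_ext.
  - apply computes_comp.
    + apply computes_prec; [apply computes_zero|].
      exact (computes_comp _ _ _ _ computes_fst computes_snd).
    + exact (computes_pair _ _ _ _ computes_zero computes_id).
  - intro x. cbv beta. rewrite snd_pair.
    destruct x; cbn [primrec]; now autorewrite with pairs.
Qed.

Definition binop_c (op f g : code) : code := CComp op (CPair f g).

Lemma computes_binop op f g Op F H :
  computes op (fun x => Op (fst_n x) (snd_n x)) -> computes f F -> computes g H ->
  computes (binop_c op f g) (fun x => Op (F x) (H x)).
Proof.
  intros hop hf hg. eapply computes_ext.
  - exact (computes_comp _ _ _ _ hop (computes_pair _ _ _ _ hf hg)).
  - intro x. cbv beta. now rewrite fst_pair, snd_pair.
Qed.

Definition add_c : code := iter_c CSucc.

Lemma computes_add : computes add_c (fun x => fst_n x + snd_n x).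
Proof.
  eapply computes_ext; [exact (computes_iter _ _ computes_succ)|].
  intro x. cbv beta. induction (snd_n x); simpl Nat.iter; lia.
Qed.

Definition sub_c : code := iter_c pred_c.

Lemma computes_sub : computes sub_c (fun x => fst_n x - snd_n x).
Proof.
  eapply computes_ext; [exact (computes_iter _ _ computes_pred)|].
  intro x. cbv beta. induction (snd_n x); simpl Nat.iter; lia.
Qed.

Definition mul_c : code := CPrec CZero (binop_c add_c (CComp CSnd CSnd) CFst).

Lemma computes_mul : computes mul_c (fun x => fst_n x * snd_n x).
Proof.
  eapply computes_ext.
  - apply computes_prec; [apply computes_zero|].
    apply computes_binop; [exact computes_add | | exact computes_fst].
    exact (computes_comp _ _ _ _ computes_snd computes_snd).
  - intro x. cbv beta. generalize (snd_n x). induction n as [|n IH]; cbn [primrec Nat.iter]; [lia|].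
    rewrite !snd_pair, fst_pair, IH. lia.
Qed.

Definition plus_c f g := binop_c add_c f g.
Definition minus_c f g := binop_c sub_c f g.
Definition times_c f g := binop_c mul_c f g.

Lemma computes_plus f g F H :
  computes f F -> computes g H -> computes (plus_c f g) (fun x => F x + H x).
Proof. exact (computes_binop _ _ _ _ _ _ computes_add). Qed.

Lemma computes_minus f g F H :
  computes f F -> computes g H -> computes (minus_c f g) (fun x => F x - H x).
Proof. exact (computes_binop _ _ _ _ _ _ computes_sub). Qed.

Lemma computes_times f g F H :
  computes f F -> computes g H -> computes (times_c f g) (fun x => F x * H x).
Proof. exact (computes_binop _ _ _ _ _ _ computes_mul). Qed.

Definition neg_c : code := minus_c (const_c 1) CId.

Lemma computes_neg : computes neg_c (fun x => 1 - x).
Proof. exact (computes_minus _ _ _ _ (computes_const 1) computes_id). Qed.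

Definition sg_c : code := CComp neg_c neg_c.

Lemma computes_sg : computes sg_c (fun x => 1 - (1 - x)).
Proof. exact (computes_comp _ _ _ _ computes_neg computes_neg). Qed.

(* [enc_nats (x :: s) = S (pair x (enc_nats s))]: head and tail are read off the predecessor. *)
Definition tail_code (v : nat) : nat := snd_n (Nat.pred v).

Definition nth_code (v i : nat) : nat := fst_n (Nat.pred (Nat.iter i tail_code v)).

Lemma iter_tail_code_enc s i : Nat.iter i tail_code (enc_nats s) = enc_nats (skipn i s).
Proof.
  induction i as [|i IH]; [reflexivity|]. rewrite Nat.iter_succ, IH. clear IH.
  revert s. induction i as [|i IH]; intros [|x s]; cbn [skipn enc_nats]; auto.
  unfold tail_code. cbn [Nat.pred]. now rewrite snd_pair.
Qed.

Lemma nth_code_enc s i : nth_code (enc_nats s) i = nth i s 0.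
Proof.
  unfold nth_code. rewrite iter_tail_code_enc.
  revert s. induction i as [|i IH]; intros [|x s]; cbn [skipn enc_nats]; auto.
  cbn [Nat.pred]. now rewrite fst_pair.
Qed.

Definition tails_c : code := iter_c (CComp CSnd pred_c).

Lemma computes_tails : computes tails_c (fun x => Nat.iter (snd_n x) tail_code (fst_n x)).
Proof. exact (computes_iter _ _ (computes_comp _ _ _ _ computes_snd computes_pred)). Qed.

Definition nth_c : code := CComp CFst (CComp pred_c tails_c).

Lemma computes_nth : computes nth_c (fun x => nth_code (fst_n x) (snd_n x)).
Proof.
  exact (computes_comp _ _ _ _ computes_fst (computes_comp _ _ _ _ computes_pred computes_tails)).
Qed.

Definition length_c : code := CMu tails_c.

Lemma eval_length G s y : eval G length_c (enc_nats s) y <-> y = length s.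
Proof.
  assert (Hskip : forall n, Nat.iter n tail_code (enc_nats s) = 0 <-> length s <= n).
  { intro n. rewrite iter_tail_code_enc.
    pose proof (length_skipn n s) as E. destruct (skipn n s); cbn in *; split; lia. }
  unfold length_c. rewrite (eval_mu_iff _ _ computes_tails).
  rewrite fst_pair, snd_pair, Hskip. split.
  - intros [Hle Hlt]. destruct (Nat.lt_ge_cases (length s) y) as [Hy|Hy]; [|lia].
    specialize (Hlt _ Hy). rewrite fst_pair, snd_pair, Hskip in Hlt. lia.
  - intros ->. split; [lia|]. intros m Hm. rewrite fst_pair, snd_pair, Hskip. lia.
Qed.

Ltac computes_auto :=
  repeat first
    [ eassumption | apply computes_zero | apply computes_succ | apply computes_id
    | apply computes_fst | apply computes_snd | apply computes_const | apply computes_neg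
    | apply computes_sg | apply computes_nth
    | eapply computes_plus | eapply computes_minus | eapply computes_times
    | eapply computes_comp | eapply computes_pair ].

Fixpoint count (p : nat -> bool) (n : nat) : nat :=
  match n with 0 => 0 | S m => count p m + Nat.b2n (p m) end.

Lemma count_ext p q n : (forall i, i < n -> p i = q i) -> count p n = count q n.
Proof. induction n as [|n IH]; cbn [count]; intro E; auto. rewrite IH, E; auto. Qed.

Lemma count_cover p q r n : (forall i, i < n -> p i = true -> q i = true \/ r i = true) ->
  count p n <= count q n + count r n.
Proof.
  induction n as [|n IH]; cbn [count]; intro Hcov; auto.
  specialize (IH (fun i Hi => Hcov i (Nat.lt_lt_succ_r _ _ Hi))).
  specialize (Hcov n (Nat.lt_succ_diag_r n)).
  destruct (p n), (q n), (r n); cbn in *; lia.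
Qed.

Lemma count_mono p q n : (forall i, i < n -> p i = true -> q i = true) -> count p n <= count q n.
Proof.
  induction n as [|n IH]; cbn [count]; intro Hpq; auto.
  specialize (IH (fun i Hi => Hpq i (Nat.lt_lt_succ_r _ _ Hi))).
  specialize (Hpq n (Nat.lt_succ_diag_r n)). destruct (p n), (q n); cbn in *; lia.
Qed.

Lemma count_split p q n :
  count p n = count (fun i => p i && q i) n + count (fun i => p i && negb (q i)) n.
Proof.
  induction n as [|n IH]; cbn [count]; auto.
  rewrite IH. destruct (p n), (q n); simpl; lia.
Qed.

Lemma count_le p n : count p n <= n.
Proof. induction n; cbn [count]; auto. destruct (p n); simpl; lia. Qed.

Lemma count_le_bound p n c : (forall i, p i = true -> i < c) -> count p n <= c.
Proof.
  intro Hc. enough (count p n <= Nat.min n c) by lia.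
  induction n as [|n IH]; cbn [count]; [lia|].
  pose proof (count_le p n). specialize (Hc n).
  destruct (p n); cbn [Nat.b2n]; [specialize (Hc eq_refl)|]; lia.
Qed.

Lemma count_le_mono p m n : m <= n -> count p m <= count p n.
Proof. induction 1; simpl; lia. Qed.

Lemma length_filter_seq p n : length (filter p (seq 0 n)) = count p n.
Proof.
  induction n as [|n IH]; [reflexivity|].
  rewrite seq_S, filter_app, length_app, IH. cbn. destruct (p n); simpl; lia.
Qed.

Definition halts (e : code) (x : nat) : Prop := exists y, eval0 e x y.

Definition zero_test_c (d : code) : code := CMu (CComp d CFst).

Lemma halts_zero_test d D x : computes d D -> halts (zero_test_c d) x <-> D x = 0.
Proof.
  intro hd. pose proof (eval_mu_iff _ _ (computes_comp _ _ _ _ hd computes_fst)) as Hmu.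
  unfold halts, eval0, zero_test_c. split.
  - intros [n Hn]. apply Hmu in Hn as [Hn _]. now rewrite fst_pair in Hn.
  - intro H0. exists 0. apply Hmu. rewrite fst_pair. split; [exact H0 | lia].
Qed.

(* Primitive recursion on the bit [b]: no step if [b = 0], one step running [e] on [n]
   if [b = 1]. *)
Definition guard_c (e : code) : code := CPrec CZero (CComp e CFst).

Lemma halts_guard e n (b : bool) :
  halts (guard_c e) (pair n (Nat.b2n b)) <-> b = false \/ halts e n.
Proof.
  unfold halts, eval0. split.
  - intros [w Hw]. destruct b; [right | now left].
    apply eval_prec_inv in Hw as [(a & E & _) | (a & m & z & E & _ & Hstep)];
      apply pair_inj in E as [<- E]; [discriminate|].
    apply eval_comp_inv in Hstep as (y & Hy & He). apply computes_fst in Hy.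
    rewrite fst_pair in Hy. subst. eauto.
  - intros [-> | [y Hy]]; [exists 0; repeat constructor|].
    destruct b; [|exists 0; repeat constructor].
    exists y. econstructor; [constructor; constructor|].
    econstructor; [apply computes_fst; reflexivity|]. now rewrite fst_pair.
Qed.

Lemma eval_prec_zero_all g (Q : nat -> nat -> Prop) :
  (forall a n z y, eval0 g (pair a (pair n z)) y <-> Q a n /\ y = 0) ->
  forall a n y, eval0 (CPrec CZero g) (pair a n) y <-> (forall m, m < n -> Q a m) /\ y = 0.
Proof.
  intros hg a n. induction n as [|n IH]; intro y; split.
  - intros [(a' & E & Hz) | (a' & n' & z & E & _)]%eval_prec_inv;
      apply pair_inj in E as [<- E]; [|discriminate].
    apply computes_zero in Hz. split; [lia | exact Hz].
  - intros [_ ->]. repeat constructor.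
  - intros [(a' & E & _) | (a' & n' & z & E & Hrec & Hg)]%eval_prec_inv;
      apply pair_inj in E as [<- E]; [discriminate|].
    injection E as <-. apply IH in Hrec as [Hall ->]. apply hg in Hg as [Hn ->].
    split; [|reflexivity]. intros m Hm.
    destruct (Nat.eq_dec m n) as [->|]; [exact Hn | apply Hall; lia].
  - intros [Hall ->]. econstructor.
    + apply IH. split; [intros m Hm; apply Hall; lia | reflexivity].
    + apply hg. split; [apply Hall; lia | reflexivity].
Qed.

Definition check_step_c (b e : code) : code :=
  CComp CZero (CComp (guard_c e)
    (CPair (CComp CFst CSnd) (CComp b (CPair CFst (CComp CFst CSnd))))).

Lemma eval_check_step b e p a n z y : computes b (fun y => Nat.b2n (p y)) ->
  eval0 (check_step_c b e) (pair a (pair n z)) y <-> (p (pair a n) = false \/ halts e n) /\ y = 0.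
Proof.
  intro hb.
  pose proof (computes_pair _ _ _ _ (computes_comp _ _ _ _ computes_fst computes_snd)
    (computes_comp _ _ _ _ hb (computes_pair _ _ _ _ computes_fst
      (computes_comp _ _ _ _ computes_fst computes_snd)))) as Harg.
  rewrite <- halts_guard. unfold halts, eval0. split.
  - intros (w & Hw & Hz)%eval_comp_inv. apply computes_zero in Hz.
    apply eval_comp_inv in Hw as (u & Hu & Hg). apply Harg in Hu. autorewrite with pairs in Hu.
    subst. eauto.
  - intros [[w Hw] ->]. econstructor; [|constructor]. econstructor; [|exact Hw].
    apply Harg. now autorewrite with pairs.
Qed.

Definition check_below_c (b e : code) : code :=
  CComp (CPrec CZero (check_step_c b e)) (CPair CId CSnd).

Lemma halts_check_below b e p a : computes b (fun y => Nat.b2n (p y)) ->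
  halts (check_below_c b e) a <-> forall m, m < snd_n a -> p (pair a m) = false \/ halts e m.
Proof.
  intro hb. pose proof (eval_prec_zero_all _ _ (fun a n z y => eval_check_step b e p a n z y hb))
    as Hloop.
  pose proof (computes_pair _ _ _ _ computes_id computes_snd) as Harg.
  unfold halts, eval0, check_below_c. split.
  - intros [y (u & Hu & Hl)%eval_comp_inv]. apply Harg in Hu. subst.
    now apply Hloop in Hl as [Hall _].
  - intro Hall. exists 0. econstructor; [apply Harg; reflexivity|].
    apply Hloop. split; [exact Hall | reflexivity].
Qed.

Lemma halts_pair f g x : halts (CPair f g) x <-> halts f x /\ halts g x.
Proof.
  split.
  - intros [w (y & z & Hf & Hg & _)%eval_pair_inv]. split; eexists; eassumption.
  - intros [[y Hf] [z Hg]]. exists (pair y z). now constructor.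
Qed.

Lemma halts_comp f h x v : (forall y, eval0 h x y <-> y = v) ->
  halts (CComp f h) x <-> halts f v.
Proof.
  intro hh. split.
  - intros [z (y & Hh & Hf)%eval_comp_inv]. apply hh in Hh. subst. eexists; eassumption.
  - intros [z Hf]. exists z. econstructor; [apply hh; reflexivity | exact Hf].
Qed.

Definition flagged (K : nat) (s : list nat) (i : nat) : bool :=
  (length s <=? K * i) && negb (nth i s 0 =? 0).

Definition dense_sound (K M j : nat) (e : code) (s : list nat) : Prop :=
  M <= length s /\
  j * length s <= K * count (flagged K s) (length s) + 2 * length s /\
  forall i, i < length s -> flagged K s i = true -> halts e i.

Definition flag_at (K y : nat) : bool :=
  (snd_n (fst_n y) <=? K * snd_n y) && negb (nth_code (fst_n (fst_n y)) (snd_n y) =? 0).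

Lemma flag_at_enc K s i : flag_at K (pair (pair (enc_nats s) (length s)) i) = flagged K s i.
Proof. unfold flag_at, flagged. autorewrite with pairs. now rewrite nth_code_enc. Qed.

Definition flag_c (K : nat) : code :=
  times_c (CComp neg_c (minus_c (CComp CSnd CFst) (times_c (const_c K) CSnd)))
          (CComp sg_c (CComp nth_c (CPair (CComp CFst CFst) CSnd))).

Lemma computes_flag K : computes (flag_c K) (fun y => Nat.b2n (flag_at K y)).
Proof.
  eapply computes_ext.
  - unfold flag_c. computes_auto.
  - intro y. unfold flag_at. cbv beta. autorewrite with pairs.
    destruct (Nat.leb_spec (snd_n (fst_n y)) (K * snd_n y)) as [Hle|Hgt];
      [replace (snd_n (fst_n y) - K * snd_n y) with 0 by lia
      |replace (1 - (snd_n (fst_n y) - K * snd_n y)) with 0 by lia];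
      destruct (Nat.eqb_spec (nth_code (fst_n (fst_n y)) (snd_n y)) 0) as [->|Hne];
      cbn [andb negb Nat.b2n]; lia.
Qed.

Definition count_c (b : code) : code :=
  CComp (CPrec CZero (plus_c (CComp CSnd CSnd) (CComp b (CPair CFst (CComp CFst CSnd)))))
        (CPair CId CSnd).

Lemma computes_count b p : computes b (fun y => Nat.b2n (p y)) ->
  computes (count_c b) (fun a => count (fun i => p (pair a i)) (snd_n a)).
Proof.
  intro hb. eapply computes_ext.
  - unfold count_c. eapply computes_comp; [eapply computes_prec|]; computes_auto.
  - intro a. cbv beta. autorewrite with pairs. generalize (snd_n a).
    induction n as [|n IH]; cbn [primrec count]; [reflexivity|].
    autorewrite with pairs. now rewrite IH.
Qed.

Definition dense_test_c (K M j : nat) : code :=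
  plus_c (minus_c (const_c M) CSnd)
         (minus_c (times_c (const_c j) CSnd)
                  (plus_c (times_c (const_c K) (count_c (flag_c K))) (times_c (const_c 2) CSnd))).

Lemma computes_dense_test K M j : computes (dense_test_c K M j) (fun a =>
  (M - snd_n a) +
  (j * snd_n a - (K * count (fun i => flag_at K (pair a i)) (snd_n a) + 2 * snd_n a))).
Proof.
  pose proof (computes_count _ _ (computes_flag K)).
  unfold dense_test_c. computes_auto.
Qed.

Definition dense_sound_c (K M j : nat) (e : code) : code :=
  CComp (CPair (zero_test_c (dense_test_c K M j)) (check_below_c (flag_c K) e))
        (CPair CId length_c).

Lemma halts_dense_sound K M j e s :
  halts (dense_sound_c K M j e) (enc_nats s) <-> dense_sound K M j e s.
Proof.
  assert (Hin : forall y, eval0 (CPair CId length_c) (enc_nats s) y <->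
                          y = pair (enc_nats s) (length s)).
  { intro y. split.
    - intros (v & n & Hv & Hn & ->)%eval_pair_inv.
      apply computes_id in Hv. apply eval_length in Hn. now subst.
    - intros ->. constructor; [now apply computes_id | now apply eval_length]. }
  unfold dense_sound_c. rewrite (halts_comp _ _ _ _ Hin), halts_pair,
    (halts_zero_test _ _ _ (computes_dense_test K M j)),
    (halts_check_below _ _ _ _ (computes_flag K)).
  autorewrite with pairs.
  rewrite (count_ext _ (flagged K s)) by (intros; apply flag_at_enc).
  unfold dense_sound. split.
  - intros [Hd Hall]. split; [lia|]. split; [lia|].
    intros i Hi Hf. rewrite <- flag_at_enc in Hf.
    destruct (Hall i Hi) as [Hfalse|He]; [congruence | exact He].
  - intros (HM & Hj & Hall). split; [lia|]. intros m Hm. rewrite flag_at_enc.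
    destruct (flagged K s m) eqn:Hf; [right; now apply Hall | now left].
Qed.

Lemma enumerable_dense_sound K M j e : enumerable_nats (dense_sound K M j e).
Proof. exists (dense_sound_c K M j e). intro s. symmetry. apply halts_dense_sound. Qed.

Lemma map_enc_bits_strings_of_len k : map enc_bits (strings_of_len k) = seq (2 ^ k - 1) (2 ^ k).
Proof.
  assert (Hdouble : forall a n,
    flat_map (fun x => [2 * x + 1; 2 * x + 2]) (seq a n) = seq (2 * a + 1) (2 * n)).
  { intros a n. revert a. induction n as [|n IH]; intro a; [reflexivity|].
    cbn [seq flat_map]. rewrite IH. replace (2 * S n) with (S (S (2 * n))) by lia.
    cbn [seq app]. do 3 f_equal; lia. }
  induction k as [|k IH]; [reflexivity|]. cbn [strings_of_len].
  assert (Hmap : forall l, map enc_bits (flat_map (fun s => [false :: s; true :: s]) l) =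
                           flat_map (fun x => [2 * x + 1; 2 * x + 2]) (map enc_bits l)).
  { induction l as [|s l IHl]; [reflexivity|]. cbn. now rewrite IHl. }
  rewrite Hmap, IH, Hdouble. pose proof (Nat.pow_nonzero 2 k). cbn [Nat.pow]. f_equal; lia.
Qed.

Lemma map_enc_bits_strings_upto n : map enc_bits (strings_upto n) = seq 0 (2 ^ S n - 1).
Proof.
  unfold strings_upto. induction n as [|n IH]; [reflexivity|].
  rewrite seq_S, flat_map_app, map_app, IH. cbn [flat_map Nat.add]. rewrite app_nil_r.
  rewrite map_enc_bits_strings_of_len, <- seq_app. pose proof (Nat.pow_nonzero 2 n).
  cbn [Nat.pow]. f_equal; lia.
Qed.

Lemma err_frac_count alpha A p :
  (forall s, negb (Bool.eqb (alpha s) (A s)) = p (enc_bits s)) ->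
  err_frac alpha A = fun n => (INR (count p (2 ^ S n - 1)) / INR (2 ^ S n - 1))%R.
Proof.
  intro Hp. apply functional_extensionality. intro n. unfold err_frac.
  rewrite <- (length_map enc_bits (strings_upto n)), map_enc_bits_strings_upto, length_seq.
  rewrite <- length_filter_seq, <- map_enc_bits_strings_upto. do 3 f_equal.
  induction (strings_upto n) as [|s l IH]; [reflexivity|]. cbn. rewrite Hp.
  destruct (p (enc_bits s)); cbn; now rewrite IH.
Qed.

Definition haltsb (e : code) (i : nat) : bool :=
  if excluded_middle_informative (halts e i) then true else false.

Lemma haltsb_spec e i : haltsb e i = true <-> halts e i.
Proof. unfold haltsb. destruct excluded_middle_informative; split; easy. Qed.

Lemma upper_density_level p K : exists j,
  (forall M, exists N, M <= N /\ j * N <= K * count p N) /\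
  (exists M, forall N, M <= N -> K * count p N < S j * N).
Proof.
  set (P j := forall M, exists N, M <= N /\ j * N <= K * count p N).
  assert (P0 : P 0) by (intro M; exists M; lia).
  assert (PK : ~ P (S K)).
  { intro H. destruct (H 1) as (N & HN & Hj). pose proof (count_le p N). nia. }
  assert (Hstep : exists j, P j /\ ~ P (S j)).
  { induction (S K) as [|k IH]; [contradiction|].
    destruct (classic (P k)) as [Hk|Hk]; [now exists k | exact (IH Hk)]. }
  destruct Hstep as (j & Pj & nPj). exists j. split; [exact Pj|].
  apply not_all_ex_not in nPj as [M HM]. exists M. intros N HN.
  apply Nat.nle_gt. intro Hle. apply HM. now exists N.
Qed.

Lemma count_not_tail K N : 1 <= K -> K * count (fun i => negb (N <=? K * i)) N <= N + K.
Proof.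
  intro HK. assert (H : count (fun i => negb (N <=? K * i)) N <= N / K + 1).
  { apply count_le_bound. intros i Hi. apply negb_true_iff, Nat.leb_gt in Hi.
    assert (i <= N / K) by (apply Nat.div_le_lower_bound; lia). lia. }
  pose proof (Nat.Div0.mul_div_le N K). nia.
Qed.

Definition disagree (G : nat -> nat) (e : code) (i : nat) : bool :=
  negb (Bool.eqb (negb (G i =? 0)) (haltsb e i)).

Lemma nth_map_seq (f : nat -> nat) a n k : k < n -> nth k (map f (seq a n)) 0 = f (a + k).
Proof.
  intro Hk. rewrite (nth_indep _ 0 (f 0)) by now rewrite length_map, length_seq.
  now rewrite map_nth, seq_nth.
Qed.

Lemma nth_prefix G n i : i < n -> nth i (prefix G n) 0 = G i.
Proof. intro Hi. exact (nth_map_seq G 0 n i Hi). Qed.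

Lemma length_prefix G n : length (prefix G n) = n.
Proof. unfold prefix. now rewrite length_map, length_seq. Qed.

Lemma disagree_small_of_dense_sound G e K M j n : 1 <= K ->
  K * count (haltsb e) n < S j * n ->
  dense_sound K M j e (prefix G n) ->
  K * count (disagree G e) n <= 4 * n + K.
Proof.
  intros HK Hup (_ & Hdense & Hsound). rewrite length_prefix in Hdense, Hsound.
  set (tail i := n <=? K * i).
  assert (Hflag : forall i, i < n -> flagged K (prefix G n) i = tail i && negb (G i =? 0)).
  { intros i Hi. unfold flagged. now rewrite length_prefix, nth_prefix. }
  assert (Hin : forall i, i < n -> tail i = true -> G i <> 0 -> haltsb e i = true).
  { intros i Hi Ht HG. apply haltsb_spec, Hsound; [exact Hi|].
    rewrite Hflag, Ht by exact Hi. now apply Nat.eqb_neq in HG as ->. }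
  set (missed i := (tail i && haltsb e i) && (G i =? 0)).
  set (hit i := (tail i && haltsb e i) && negb (G i =? 0)).
  assert (Hcover : count (disagree G e) n <= count (fun i => negb (tail i)) n + count missed n).
  { apply count_cover. intros i Hi Hd. unfold disagree, missed in *.
    destruct (tail i) eqn:Ht; [right | now left].
    destruct (G i =? 0) eqn:HG0; cbn in *.
    - now destruct (haltsb e i).
    - rewrite Hin in Hd by (auto; now apply Nat.eqb_neq). discriminate. }
  assert (Hhit : count (flagged K (prefix G n)) n <= count hit n).
  { apply count_mono. intros i Hi. rewrite Hflag by exact Hi. unfold hit.
    destruct (tail i) eqn:Ht, (G i =? 0) eqn:HG0; cbn; try easy.
    rewrite Hin by (auto; now apply Nat.eqb_neq). reflexivity. }
  assert (Htail : count (fun i => tail i && haltsb e i) n <= count (haltsb e) n).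
  { apply count_mono. intros i _ H. now apply andb_true_iff in H. }
  assert (Hsplit : count (fun i => tail i && haltsb e i) n = count missed n + count hit n)
    by apply count_split.
  assert (Hnot : K * count (fun i => negb (tail i)) n <= n + K) by exact (count_not_tail K n HK).
  rewrite Hsplit in Htail.
  apply (Nat.mul_le_mono_l _ _ K) in Hcover, Hhit, Htail.
  rewrite Nat.mul_add_distr_l in Hcover, Htail. lia.
Qed.

Lemma dense_sound_extension e K M j p n N : length p = n ->
  1 <= K -> M <= N -> K * n <= N -> K <= N -> j * N <= K * count (haltsb e) N ->
  dense_sound K M j e (p ++ map (fun i => Nat.b2n (haltsb e i)) (seq n (N - n))).
Proof.
  intros Hn HK HM Hp HKN Hj.
  set (t := map (fun i => Nat.b2n (haltsb e i)) (seq n (N - n))).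
  assert (Hlen : length (p ++ t) = N)
    by (unfold t; rewrite length_app, length_map, length_seq; nia).
  assert (Hflag : forall i, i < N -> flagged K (p ++ t) i = (N <=? K * i) && haltsb e i).
  { intros i Hi. unfold flagged. rewrite Hlen.
    destruct (Nat.leb_spec N (K * i)) as [Htail|]; [cbn|reflexivity].
    assert (n <= i) by nia.
    rewrite app_nth2, Hn by lia. unfold t. rewrite nth_map_seq by lia.
    replace (n + (i - n)) with i by lia. now destruct (haltsb e i). }
  unfold dense_sound. rewrite Hlen. split; [exact HM|]. split.
  - assert (Hcover : count (haltsb e) N <=
                     count (flagged K (p ++ t)) N + count (fun i => negb (N <=? K * i)) N).
    { apply count_cover. intros i Hi Hh. rewrite Hflag, Hh by exact Hi.
      destruct (N <=? K * i); auto. }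
    pose proof (count_not_tail K N HK).
    apply (Nat.mul_le_mono_l _ _ K) in Hcover. rewrite Nat.mul_add_distr_l in Hcover. lia.
  - intros i Hi Hf. rewrite Hflag in Hf by exact Hi.
    apply haltsb_spec. now apply andb_true_iff in Hf as [_ Hf].
Qed.

Lemma generic_disagreement_sparse G e : one_generic G -> forall K, 1 <= K -> forall M0,
  exists N, M0 <= N /\ K * count (disagree G e) N <= 4 * N + K.
Proof.
  intros HG K HK M0.
  destruct (upper_density_level (haltsb e) K) as (j & Hlow & M1 & Hup).
  set (M := M0 + M1 + K).
  destruct (HG _ (enumerable_dense_sound K M j e)) as [[n Hn] | [n Havoid]].
  - exists n. pose proof (proj1 Hn) as HMn. rewrite length_prefix in HMn. split; [lia|].
    apply (disagree_small_of_dense_sound G e K M j n HK); [apply Hup; lia | exact Hn].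
  - exfalso. destruct (Hlow (M + K * n)) as (N & HN & Hj).
    apply (Havoid (map (fun i => Nat.b2n (haltsb e i)) (seq n (N - n)))).
    apply dense_sound_extension; [apply length_prefix | lia .. | exact Hj].
Qed.

Lemma dyadic_density_liminf_zero (p : nat -> bool) :
  (forall K, 1 <= K -> forall M0, exists N, M0 <= N /\ K * count p N <= 4 * N + K) ->
  LimInf_seq (fun n => (INR (count p (2 ^ S n - 1)) / INR (2 ^ S n - 1))%R) = 0%R.
Proof.
  intro Hsparse. apply is_LimInf_seq_unique. intro eps. split.
  - intro N0. destruct (archimed_cor1 (eps / 9)) as (K & HKeps & HK); [destruct eps; cbn; lra|].
    destruct (Hsparse K HK (2 ^ (N0 + K + 1))) as (N & HN & Hcount).
    set (L := Nat.log2 (N + 1)).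
    destruct (Nat.log2_spec (N + 1) ltac:(lia)) as [HL1 HL2]. fold L in HL1, HL2.
    assert (HL : N0 + K + 1 < S L) by (apply (Nat.pow_lt_mono_r_iff 2); lia).
    exists (L - 1). split; [lia|]. replace (S (L - 1)) with L by lia.
    (* [s] is the largest length of the form [2^L - 1] not exceeding [N]. *)
    set (s := 2 ^ L - 1).
    assert (Hs : s <= N <= 2 * s) by (unfold s; cbn [Nat.pow] in HL2; lia).
    assert (HKs : K <= s).
    { pose proof (Nat.pow_gt_lin_r 2 K ltac:(lia)).
      pose proof (Nat.pow_le_mono_r 2 K L ltac:(lia) ltac:(lia)). unfold s. lia. }
    assert (Hbound : K * count p s <= 9 * s).
    { pose proof (count_le_mono p s N (proj1 Hs)).
      pose proof (Nat.mul_le_mono_l _ _ K H). lia. }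
    apply le_INR in Hbound. rewrite !mult_INR in Hbound.
    assert (HKpos : (0 < INR K)%R) by (apply lt_0_INR; lia).
    assert (Hspos : (0 < INR s)%R) by (apply lt_0_INR; lia).
    assert (H9 : (9 < eps * INR K)%R).
    { apply (Rmult_lt_compat_r (INR K)) in HKeps; [|exact HKpos].
      rewrite Rinv_l in HKeps by lra. lra. }
    cbn [INR] in Hbound. apply Rlt_div_l; [lra|]. rewrite Rplus_0_l. nra.
  - exists 0. intros n _. rewrite Rminus_0_l.
    apply Rlt_le_trans with 0%R; [destruct eps; cbn; lra|].
    apply Rdiv_le_0_compat; [apply pos_INR|].
    apply lt_0_INR. pose proof (Nat.pow_nonzero 2 (S n)). cbn in *. lia.
Qed.

Theorem lemma5p2 :
  forall A : list bool -> bool, enumerable_bits A ->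
  exists Psi : code,
    forall G : nat -> nat, one_generic G ->
      exists alpha : list bool -> bool,
        (forall s, eval G Psi (enc_bits s) (if alpha s then 1 else 0)) /\
        lower_err alpha A = Finite 0%R.
Proof.
  intros A [e HA]. exists (CComp sg_c COracle). intros G HG.
  exists (fun s => negb (G (enc_bits s) =? 0)). split.
  - intro s. econstructor; [constructor | apply computes_sg].
    now destruct (G (enc_bits s)).
  - assert (HAe : forall s, A s = haltsb e (enc_bits s)).
    { intro s. apply Bool.eq_true_iff_eq. rewrite haltsb_spec. apply HA. }
    unfold lower_err. rewrite (err_frac_count _ _ (disagree G e)).
    + apply dyadic_density_liminf_zero, generic_disagreement_sparse, HG.
    + intro s. unfold disagree. now rewrite HAe.
Qed.
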